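(* Assume there exists a $1$-perfect code in $H(q+1,q)$. Let $f$ be a $(b,c)$-coloring of $H(n,q)$ with main eigenvalue $\lambda\le0$. Then for all $t_1,t_2\in\{0,\dots,q\}$ with $t_1+t_2\notin\{0,2q\}$ there exists a $\big(q(b+c)-(ct_1+bt_2),\ ct_1+bt_2\big)$-coloring $F$ of $H(qn-\lambda,q)$, and $F$ has main eigenvalue $\lambda$.
   Context: The Hamming graph $H(n,q)$ has vertex set $\mathbb{Z}_q^n$, two vertices adjacent iff they differ in exactly one coordinate. A perfect $2$-coloring is a surjective map onto $\{1,2\}$ such that each vertex of color $i$ has a constant number of neighbours of each color. A $(b,c)$-coloring of $H(n,q)$ is a perfect $2$-coloring in which each color-1 vertex has exactly $b$ neighbours of color 2 and each color-2 vertex has exactly $c$ neighbours of color 1; its main eigenvalue is $\lambda=n(q-1)-(b+c)$. A $1$-perfect code in $H(n,q)$ is a set $C$ of vertices such that every radius-$1$ Hamming ball contains exactly one element of $C$. *)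

From HB Require Import structures.
From mathcomp Require Import all_boot all_order all_algebra.
Set Implicit Arguments. Unset Strict Implicit. Unset Printing Implicit Defensive.
Import Order.TTheory GRing.Theory Num.Theory.

Definition hvert (n q : nat) := {ffun 'I_n -> 'I_q}.

Definition hdist (n q : nat) (x y : hvert n q) : nat := #|[set i | x i != y i]|.

Definition hadj (n q : nat) (x y : hvert n q) : bool := hdist x y == 1%N.

Definition ncol (n q : nat) (f : hvert n q -> nat) (x : hvert n q) (k : nat) : nat :=
  #|[set y : hvert n q | hadj x y && (f y == k)]|.

(* A (b,c)-coloring of H(n,q): a surjective map onto {1,2} such that every
   colour-1 vertex has exactly b neighbours of colour 2 and every colour-2
   vertex has exactly c neighbours of colour 1.  (Since H(n,q) is regular of
   degree n(q-1), this makes the colouring perfect.) *)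
Definition bc_coloring (n q : nat) (f : hvert n q -> nat) (b c : nat) : Prop :=
  [/\ forall x, f x = 1%N \/ f x = 2%N,
      exists x, f x = 1%N,
      exists x, f x = 2%N,
      forall x, f x = 1%N -> ncol f x 2 = b
    & forall x, f x = 2%N -> ncol f x 1 = c].

Definition main_eig (n q b c : nat) : int :=
  ((n * (q - 1))%N)%:Z - ((b + c)%N)%:Z.

Definition perfect_code1 (n q : nat) (C : {set hvert n q}) : Prop :=
  forall x : hvert n q, #|[set y in C | hdist x y <= 1]| = 1%N.

From HB Require Import structures.
From mathcomp Require Import all_boot all_order all_algebra zify ring.
Import Order.TTheory GRing.Theory Num.Theory.
Set Implicit Arguments. Unset Strict Implicit. Unset Printing Implicit Defensive.

(* A perfect code in H(q+1,q) has q^(q-1) words at mutual distance at least 3, so every word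
   of length q-1 is the prefix of exactly one codeword. For z in Z_q^q let c be the codeword
   extending the first q-1 letters of z and put brho z = (z_(q-1) - c_(q-1), c_q); the distance
   bound makes brho map the neighbours of z bijectively onto the pairs whose first entry differs
   from that of brho z.
   Split a vertex x of H(qn+d,q), d = -lambda = b+c-n(q-1), into n blocks of length q and d extra
   letters, and send it to (w,s) in Z_q^n * Z_q: w_j is the first entry of brho on block j, and s
   sums the second entries and the extra letters. The neighbours of x then cover every neighbour
   of w once with each value of s, and w itself d times with each value other than s. Hence
   colouring x by 1 exactly when s < t_(f w) is perfect, with parameters computed from those of f,
   because the d extra neighbours exactly make up for the degree deficit of H(n,q). *)

Section HammingGraph.
Variables n q : nat.
Implicit Types x y : hvert n q.

Definition upd x (i : 'I_n) (v : 'I_q) : hvert n q :=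
  [ffun j => if j == i then v else x j].

Lemma upd_at x i v : upd x i v i = v.
Proof. by rewrite ffunE eqxx. Qed.

Lemma upd_id x i v j : j != i -> upd x i v j = x j.
Proof. by move=> /negbTE ji; rewrite ffunE ji. Qed.

Lemma upd_upd x i v v' : upd (upd x i v) i v' = upd x i v'.
Proof. by apply/ffunP => j; rewrite !ffunE; case: eqP. Qed.

Lemma hdistE x y : hdist x y = \sum_i (x i != y i).
Proof. by rewrite /hdist -sum1_card big_mkcond; apply: eq_bigr => i _; rewrite inE. Qed.

Lemma hdistC x y : hdist x y = hdist y x.
Proof. by rewrite !hdistE; apply: eq_bigr => i _; rewrite eq_sym. Qed.

Lemma hdist0 x y : (hdist x y == 0) = (x == y).
Proof.
rewrite hdistE sum_nat_eq0; apply/forallP/eqP => [xy|-> i]; last by rewrite eqxx.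
by apply/ffunP => i; apply/eqP; have := xy i; rewrite implyTb eqb0 negbK.
Qed.

Lemma hdist_upd x y i : x i != y i -> hdist (upd x i (y i)) y = (hdist x y).-1.
Proof.
move=> xyi; rewrite !hdistE (bigD1 i) //= [in RHS](bigD1 i) //= upd_at eqxx xyi.
by congr (_ + _); apply: eq_bigr => j ji; rewrite upd_id.
Qed.

Lemma hdist_updr x i v : hdist x (upd x i v) = (x i != v).
Proof.
rewrite hdistE (bigD1 i) //= upd_at big1 ?addn0 // => j ji.
by rewrite upd_id ?eqxx.
Qed.

Lemma hdist_upd2 x i v j w : hdist (upd x i v) (upd x j w) <= 2.
Proof.
rewrite hdistE; apply: (@leq_trans (\sum_l ((l == i) + (l == j)))).
  apply: leq_sum => l _; rewrite !ffunE.
  by case: (l == i); case: (l == j); rewrite /= ?eqxx //; case: (_ != _).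
have one l0 : \sum_l (l == l0) = 1 by rewrite (bigD1 l0) //= eqxx big1 // => l /negbTE ->.
by rewrite big_split /= !one.
Qed.

Lemma hadj_upd x y :
  hadj x y = [exists i, (y i != x i) && (y == upd x i (y i))].
Proof.
rewrite /hadj /hdist; apply/idP/existsP.
  move/cards1P => [i Di]; exists i.
  have xyE j : (x j != y j) = (j == i).
    by have := f_equal (fun S : {set _} => j \in S) Di; rewrite !inE.
  rewrite eq_sym xyE eqxx /=; apply/eqP/ffunP => j; rewrite ffunE.
  case: eqP => [-> //|/eqP ji]; apply/eqP; rewrite eq_sym.
  by apply: negbNE; rewrite xyE.
move=> [i /andP[yxi /eqP ->]]; apply/cards1P; exists i.
apply/setP => j; rewrite !inE !ffunE; case: (eqVneq j i) => [->|_].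
  by rewrite eq_sym yxi.
by rewrite eqxx.
Qed.

Lemma sum_hadj x (G : hvert n q -> nat) :
  \sum_(y | hadj x y) G y = \sum_i \sum_(v | v != x i) G (upd x i v).
Proof.
rewrite pair_big_dep /=.
set A := [set p : 'I_n * 'I_q | p.2 != x p.1].
have updI : {in A &, injective (fun p => upd x p.1 p.2)}.
  move=> [i v] [i' v']; rewrite !inE /= => xv xv' /ffunP E.
  have := E i; rewrite !ffunE eqxx; case: eqP => [<- -> //|_ vE].
  by rewrite vE eqxx in xv.
rewrite (eq_bigl (fun p => p \in A)); last by move=> p; rewrite inE.
rewrite -(big_imset G updI) /=; apply: eq_bigl => y.
rewrite hadj_upd; apply/existsP/imsetP.
  by move=> [i /andP[yxi /eqP yE]]; exists (i, y i); rewrite ?inE.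
move=> [[i v]]; rewrite inE /= => xv ->; exists i.
by rewrite upd_at xv /=.
Qed.

Lemma sum1_neq (a : 'I_q) : \sum_(v | v != a) 1 = q.-1.
Proof. by rewrite sum1_card cardC1 card_ord. Qed.

Lemma card_hadj_pairs x :
  #|[set p : 'I_n * 'I_q | p.2 != x p.1]| = n * q.-1.
Proof.
rewrite -sum1_card (eq_bigl (fun p : 'I_n * 'I_q => p.2 != x p.1)); last first.
  by move=> p; rewrite inE.
rewrite -(pair_big_dep xpredT (fun i v => v != x i) (fun _ _ => 1)) /=.
by rewrite (eq_bigr (fun _ => q.-1)) ?sum_nat_const ?card_ord // => i _; rewrite sum1_neq.
Qed.

Lemma card_hadj x : #|[set y | hadj x y]| = n * q.-1.
Proof.
rewrite -sum1_card (eq_bigl (hadj x)) => [|y]; last by rewrite inE.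
rewrite sum_hadj (eq_bigr (fun _ => q.-1)) => [|i _]; last exact: sum1_neq.
by rewrite sum_nat_const card_ord.
Qed.

Lemma card_ball x : #|[set y | hdist x y <= 1]| = 1 + n * q.-1.
Proof.
have -> : [set y | hdist x y <= 1] = x |: [set y | hadj x y].
  apply/setP => y; rewrite !inE /hadj leq_eqVlt ltnS leqn0 hdist0.
  by rewrite orbC eq_sym.
rewrite cardsU1 card_hadj inE /hadj.
by have := hdist0 x x; rewrite eqxx => /eqP ->.
Qed.

Lemma ncolE (f : hvert n q -> nat) x k :
  ncol f x k = \sum_(y | hadj x y) (f y == k).
Proof.
rewrite /ncol -sum1_card big_mkcond [RHS]big_mkcond; apply: eq_bigr => y _.
by rewrite inE; case: hadj; case: eqP.
Qed.

End HammingGraph.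

Notation widen1 := (widen_ord (leqnSn _)).

Definition init n q (x : hvert n.+1 q) : hvert n q := [ffun i => x (widen1 i)].

Lemma hdist_init n q (x y : hvert n.+1 q) :
  hdist x y = hdist (init x) (init y) + (x ord_max != y ord_max).
Proof.
by rewrite !hdistE big_ord_recr /=; congr (_ + _); apply: eq_bigr => i _; rewrite !ffunE.
Qed.

Variant ord_max_widen_spec m : 'I_m.+1 -> Type :=
  | OrdMax : ord_max_widen_spec ord_max
  | OrdWiden i : ord_max_widen_spec (widen1 i).

Lemma ord_maxVwiden m (p : 'I_m.+1) : ord_max_widen_spec p.
Proof.
case: (ltnP p m) => [pm|mp].
  have -> : p = widen1 (Ordinal pm) by apply: val_inj.
  exact: OrdWiden.
have -> : p = ord_max by apply/val_inj/eqP; rewrite /= eqn_leq mp -ltnS ltn_ord.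
exact: OrdMax.
Qed.

Lemma widen1_eq m (i j : 'I_m) : (widen1 i == widen1 j) = (i == j).
Proof. by rewrite -val_eqE. Qed.

Lemma widen1_max m (i : 'I_m) : (widen1 i == ord_max) = false.
Proof. by rewrite -val_eqE /= ltn_eqF. Qed.

Lemma init_upd_widen n q (x : hvert n.+1 q) i v : init (upd x (widen1 i) v) = upd (init x) i v.
Proof. by apply/ffunP => j; rewrite !ffunE widen1_eq. Qed.

Lemma init_upd_max n q (x : hvert n.+1 q) v : init (upd x ord_max v) = init x.
Proof. by apply/ffunP => j; rewrite !ffunE widen1_max. Qed.

Section PerfectCode.
Variables (n q : nat) (C : {set hvert n q}).
Hypothesis HC : perfect_code1 C.

Lemma perfect_code_eq c c' : c \in C -> c' \in C -> hdist c c' <= 2 -> c = c'.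
Proof.
move=> cC c'C dcc'; case: (eqVneq c c') => // /negbTE neq.
have /card_gt0P [i] : 0 < hdist c c' by rewrite lt0n hdist0 neq.
rewrite inE => cc'i; set m := upd c i (c' i).
have ball_m c0 : c0 \in C -> hdist m c0 <= 1 -> c0 \in [set y in C | hdist m y <= 1].
  by move=> c0C dm; rewrite inE c0C.
have /eqP/cards1P [y Dy] := HC m.
have /ball_m : hdist m c <= 1 by rewrite hdistC hdist_updr leq_b1.
have /ball_m : hdist m c' <= 1 by rewrite hdist_upd //; move: dcc'; case: hdist => [|[|[]]].
by rewrite Dy !inE => /(_ c'C) /eqP -> /(_ cC) /eqP ->.
Qed.

Lemma perfect_code_card : #|C| * (1 + n * q.-1) = q ^ n.
Proof.
have ball1 x : \sum_(c in C) (hdist x c <= 1) = 1.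
  rewrite -[RHS](HC x) -sum1_card [RHS]big_mkcond [LHS]big_mkcond /=.
  by apply: eq_bigr => c _; rewrite inE; case: (_ \in _).
rewrite -sum_nat_const (eq_bigr _ (fun c _ => esym (card_ball c))).
have -> : q ^ n = #|{: hvert n q}| by rewrite card_ffun !card_ord.
rewrite -sum1_card -(eq_bigr _ (fun x _ => ball1 x)) exchange_big /=.
apply: eq_bigr => c _; rewrite -sum1_card big_mkcond /=.
by apply: eq_bigr => x _; rewrite inE hdistC; case: leqP.
Qed.

End PerfectCode.

Section CodeInHqPlus1.
Variables (k : nat) (C : {set hvert k.+3 k.+2}).
Hypothesis HC : perfect_code1 C.

Lemma card_perfect_code : #|C| = k.+2 ^ k.+1.
Proof.
have := perfect_code_card HC.
have -> : k.+2 ^ k.+3 = k.+2 ^ k.+1 * k.+2 ^ 2 by rewrite -expnD addn2.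
have -> : 1 + k.+3 * k.+2.-1 = k.+2 ^ 2 by rewrite /=; ring.
by move/eqP; rewrite eqn_pmul2r ?expn_gt0 // => /eqP.
Qed.

Lemma perfect_code_head u : exists2 c, c \in C & init (init c) = u.
Proof.
have headI : {in C &, injective (fun c => init (init c))}.
  move=> c c' cC c'C /= e; apply: (perfect_code_eq HC) => //.
  rewrite hdist_init (hdist_init (init c)).
  have /eqP -> : hdist (init (init c)) (init (init c')) == 0 by rewrite hdist0 e.
  by rewrite add0n; case: (_ != _); case: (_ != _).
have : u \in [set init (init c) | c in C].
  suff -> : [set init (init c) | c in C] = setT by rewrite inE.
  apply/eqP; rewrite eqEcard subsetT (card_in_imset headI) card_perfect_code.
  by rewrite cardsT card_ffun !card_ord /=.
by case/imsetP => c cC ->; exists c.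
Qed.

Definition head_ext (u : hvert k.+1 k.+2) : hvert k.+3 k.+2 :=
  odflt [ffun _ => ord0] [pick c in C | init (init c) == u].

Lemma head_extP u : head_ext u \in C /\ init (init (head_ext u)) = u.
Proof.
rewrite /head_ext; case: pickP => [c /andP[cC /eqP] //|none].
by have [c cC cu] := perfect_code_head u; have := none c; rewrite cC cu eqxx.
Qed.

Lemma hdist_head_ext u u' : u != u' ->
  3 <= hdist u u' + (init (head_ext u) ord_max != init (head_ext u') ord_max)
                  + (head_ext u ord_max != head_ext u' ord_max).
Proof.
move=> uu'; have [[cC cu] [c'C c'u']] := (head_extP u, head_extP u').
rewrite -{1}cu -{1}c'u' -!hdist_init ltnNge; apply: contra uu' => close.
by rewrite -cu -c'u' (perfect_code_eq HC cC c'C close).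
Qed.

Implicit Types z : hvert k.+2 k.+2.

Definition bshift z : 'I_k.+2 := (z ord_max - init (head_ext (init z)) ord_max)%R.
Definition btail z : 'I_k.+2 := head_ext (init z) ord_max.
Definition brho z := (bshift z, btail z).

Lemma head_ext_upd z i v : v != z (widen1 i) ->
  (init (head_ext (init (upd z (widen1 i) v))) ord_max != init (head_ext (init z)) ord_max)
  && (btail (upd z (widen1 i) v) != btail z).
Proof.
move=> vz; have neq : init (upd z (widen1 i) v) != init z.
  by apply: contraNneq vz => /ffunP/(_ i); rewrite init_upd_widen upd_at ffunE => ->.
have := hdist_head_ext neq; rewrite init_upd_widen hdistC hdist_updr.
rewrite /btail init_upd_widen.
by case: (_ != _); case: (_ != _); case: (_ != _).
Qed.

Lemma bshift_upd z p v : v != z p -> bshift (upd z p v) != bshift z.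
Proof.
rewrite /bshift; case: (ord_maxVwiden p) => [|i] vz.
  by rewrite init_upd_max upd_at (inj_eq (addIr _)).
rewrite upd_id; last by rewrite eq_sym widen1_max.
by rewrite (inj_eq (addrI _)) (inj_eq oppr_inj); case/andP: (head_ext_upd vz).
Qed.

Lemma btail_upd z i v : v != z (widen1 i) -> btail (upd z (widen1 i) v) != btail z.
Proof. by move/head_ext_upd/andP => []. Qed.

Lemma brho_upd2 z i i' v v' : i != i' -> v != z (widen1 i) -> v' != z (widen1 i') ->
  brho (upd z (widen1 i) v) != brho (upd z (widen1 i') v').
Proof.
move=> ii' vz v'z; rewrite xpair_eqE negb_and /bshift /btail !init_upd_widen.
rewrite !upd_id ?(eq_sym ord_max) ?widen1_max // (inj_eq (addrI _)) (inj_eq oppr_inj).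
have neq : upd (init z) i v != upd (init z) i' v'.
  by apply: contraNneq vz => /ffunP/(_ i); rewrite upd_at upd_id // ffunE => ->.
have := hdist_head_ext neq; rewrite ltnNge -addnA.
apply: contraNT; rewrite negb_or !negbK => /andP[/eqP -> /eqP ->].
by rewrite !eqxx !addn0 hdist_upd2.
Qed.

Lemma brho_upd_inj z :
  {in [set p | p.2 != z p.1] &, injective (fun p => brho (upd z p.1 p.2))}.
Proof.
have tail_max v : btail (upd z ord_max v) = btail z by rewrite /btail init_upd_max.
move=> [p v] [p' v']; rewrite !inE /= => vz v'z e.
case: (eqVneq p p') => [pp' | pp'].
  subst p'; apply/eqP; rewrite xpair_eqE eqxx /=; apply: contraTT isT => vv'.
  have := @bshift_upd (upd z p v) p v'; rewrite upd_at upd_upd eq_sym => /(_ vv').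
  by have /= -> := congr1 fst e; rewrite eqxx.
move: e vz v'z pp'; case: (ord_maxVwiden p) => [|i]; case: (ord_maxVwiden p') => [|i'].
- by rewrite eqxx.
- move=> /(congr1 snd) /=; rewrite tail_max => e _ v'z _.
  by have := btail_upd v'z; rewrite e eqxx.
- move=> /(congr1 snd) /=; rewrite tail_max => e vz _ _.
  by have := btail_upd vz; rewrite e eqxx.
move=> e vz v'z; rewrite widen1_eq => ii'.
by have := brho_upd2 ii' vz v'z; rewrite e eqxx.
Qed.

Lemma brho_upd_image z :
  [set brho (upd z p.1 p.2) | p in [set p | p.2 != z p.1]] = [set us | us.1 != bshift z].
Proof.
apply/eqP; rewrite eqEcard; apply/andP; split.
  by apply/subsetP => us /imsetP[[p v]]; rewrite !inE => vz ->; apply: bshift_upd.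
rewrite (card_in_imset (@brho_upd_inj z)) card_hadj_pairs.
have -> : [set us : 'I_k.+2 * 'I_k.+2 | us.1 != bshift z] = setX [set~ bshift z] setT.
  by apply/setP => -[a b]; rewrite !inE andbT.
by rewrite cardsX cardsC1 cardsT card_ord mulnC.
Qed.

Lemma sum_brho_upd z (G : 'I_k.+2 * 'I_k.+2 -> nat) :
  \sum_p \sum_(v | v != z p) G (brho (upd z p v)) = \sum_(us | us.1 != bshift z) G us.
Proof.
rewrite pair_big_dep /= (eq_bigl (fun p => p \in [set p | p.2 != z p.1])) => [|p]; last first.
  by rewrite inE.
rewrite -(big_imset G (@brho_upd_inj z)) brho_upd_image.
by apply: eq_bigl => us; rewrite inE.
Qed.

Lemma brho_surj us : exists z, brho z = us.
Proof.
pose z0 : hvert k.+2 k.+2 := [ffun _ => ord0].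
suff [z uz] : exists z, us.1 != bshift z.
  have : us \in [set us | us.1 != bshift z] by rewrite inE.
  by rewrite -brho_upd_image => /imsetP[p _ ->]; exists (upd z p.1 p.2).
case: (eqVneq us.1 (bshift z0)) => [e|uz0]; last by exists z0.
by exists (upd z0 ord_max ord_max); rewrite e eq_sym bshift_upd // ffunE -val_eqE.
Qed.

End CodeInHqPlus1.

Lemma sum_addr (V : finZmodType) (a : V) (G : V -> nat) : \sum_h G (a + h)%R = \sum_h G h.
Proof. by rewrite [RHS](reindex_inj (addrI a)). Qed.

Lemma sum_addr_neq (V : finZmodType) (a s : V) (G : V -> nat) :
  \sum_(v | v != a) G (s - a + v)%R = \sum_(s' | s' != s) G s'.
Proof.
rewrite [RHS](reindex_inj (addrI (s - a)%R)) /=; apply: eq_bigl => v.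
by apply/esym; rewrite -addrA -[X in _ != X]addr0 (inj_eq (addrI _)) addrC subr_eq0.
Qed.

Section Product.
Variables (k n d N : nat) (C : {set hvert k.+3 k.+2}).
Hypothesis HC : perfect_code1 C.
Hypothesis cardN : #|{: 'I_n * 'I_k.+2 + 'I_d}| = N.
Implicit Types x y : hvert N k.+2.

Definition coord (u : 'I_n * 'I_k.+2 + 'I_d) : 'I_N := cast_ord cardN (enum_rank u).
Definition coord_inv (i : 'I_N) : 'I_n * 'I_k.+2 + 'I_d := enum_val (cast_ord (esym cardN) i).

Lemma coordK : cancel coord coord_inv.
Proof. by move=> u; rewrite /coord /coord_inv cast_ordK enum_rankK. Qed.

Lemma coord_invK : cancel coord_inv coord.
Proof. by move=> i; rewrite /coord /coord_inv enum_valK cast_ordKV. Qed.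

Lemma coord_eq u u' : (coord u == coord u') = (u == u').
Proof. exact/inj_eq/can_inj/coordK. Qed.

Definition block x (j : 'I_n) : hvert k.+2 k.+2 := [ffun p => x (coord (inl (j, p)))].
Definition proj_w x : hvert n k.+2 := [ffun j => bshift C (block x j)].
Definition proj_s x : 'I_k.+2 := (\sum_j btail C (block x j) + \sum_e x (coord (inr e)))%R.

Lemma block_upd_extra x e v j : block (upd x (coord (inr e)) v) j = block x j.
Proof. by apply/ffunP => p; rewrite !ffunE coord_eq. Qed.

Lemma block_upd x j p v j' :
  block (upd x (coord (inl (j, p))) v) j' = if j' == j then upd (block x j) p v else block x j'.
Proof.
apply/ffunP => p'; rewrite !ffunE coord_eq; case: (eqVneq j' j) => [->|jj'].
  by rewrite !ffunE [_ == _]xpair_eqE eqxx.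
by rewrite [_ == _]xpair_eqE (negbTE jj') ffunE.
Qed.

Lemma proj_w_upd_extra x e v : proj_w (upd x (coord (inr e)) v) = proj_w x.
Proof. by apply/ffunP => j; rewrite !ffunE block_upd_extra. Qed.

Lemma proj_s_upd_extra x e v :
  proj_s (upd x (coord (inr e)) v) = (proj_s x - x (coord (inr e)) + v)%R.
Proof.
rewrite /proj_s (eq_bigr (fun j => btail C (block x j))) => [|j _]; last first.
  by rewrite block_upd_extra.
rewrite (bigD1 e) //= [in RHS](bigD1 e) //= upd_at.
rewrite (eq_bigr (fun e' => x (coord (inr e')))) => [|e' e'e]; last first.
  by rewrite upd_id // coord_eq.
by ring.
Qed.

Lemma proj_w_upd x j p v :
  proj_w (upd x (coord (inl (j, p))) v) = upd (proj_w x) j (bshift C (upd (block x j) p v)).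
Proof. by apply/ffunP => j'; rewrite !ffunE block_upd; case: eqP. Qed.

Lemma proj_s_upd x j p v :
  proj_s (upd x (coord (inl (j, p))) v) =
  (proj_s x - btail C (block x j) + btail C (upd (block x j) p v))%R.
Proof.
rewrite /proj_s (eq_bigr (fun e => x (coord (inr e)))) => [|e _]; last first.
  by rewrite upd_id // coord_eq.
rewrite (bigD1 j) //= [in RHS](bigD1 j) //= block_upd eqxx.
rewrite (eq_bigr (fun j' => btail C (block x j'))) => [|j' j'j]; last first.
  by rewrite block_upd (negbTE j'j).
by ring.
Qed.

Lemma proj_surj (w : hvert n k.+2) (s : 'I_k.+2) (j0 : 'I_n) :
  exists x, proj_w x = w /\ proj_s x = s.
Proof.
have ex j : exists z, brho C z == (w j, if j == j0 then s else 0%R).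
  by have [z zE] := brho_surj HC (w j, if j == j0 then s else 0%R); exists z; rewrite zE.
pose Z j := xchoose (ex j).
have ZE j : brho C (Z j) = (w j, if j == j0 then s else 0%R) := eqP (xchooseP (ex j)).
pose x : hvert N k.+2 :=
  [ffun i => if coord_inv i is inl jp then Z jp.1 jp.2 else 0%R].
have blockx j : block x j = Z j by apply/ffunP => p; rewrite !ffunE coordK.
exists x; split; first by apply/ffunP => j; rewrite ffunE blockx; have /= := congr1 fst (ZE j).
rewrite /proj_s (eq_bigr (fun j => if j == j0 then s else 0%R)) => [|j _]; last first.
  by rewrite blockx; have /= := congr1 snd (ZE j).
by rewrite -big_mkcond big_pred1_eq big1 ?addr0 // => e _; rewrite ffunE coordK.
Qed.

Variable Phi : hvert n k.+2 -> 'I_k.+2 -> nat.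
Let Phi_upd x i v := Phi (proj_w (upd x i v)) (proj_s (upd x i v)).

Lemma sum_upd_extra x e :
  \sum_(v | v != x (coord (inr e))) Phi_upd x (coord (inr e)) v
  = \sum_(s | s != proj_s x) Phi (proj_w x) s.
Proof.
rewrite -(sum_addr_neq (x (coord (inr e))) (proj_s x)); apply: eq_bigr => v _.
by rewrite /Phi_upd proj_w_upd_extra proj_s_upd_extra.
Qed.

Lemma sum_upd_block x j :
  \sum_p \sum_(v | v != x (coord (inl (j, p)))) Phi_upd x (coord (inl (j, p))) v
  = \sum_(u | u != proj_w x j) \sum_h Phi (upd (proj_w x) j u) h.
Proof.
pose G us := Phi (upd (proj_w x) j us.1) (proj_s x - btail C (block x j) + us.2)%R.
transitivity (\sum_p \sum_(v | v != block x j p) G (brho C (upd (block x j) p v))).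
  apply: eq_bigr => p _; rewrite ffunE; apply: eq_bigr => v _.
  by rewrite /Phi_upd proj_w_upd proj_s_upd.
rewrite sum_brho_upd //.
rewrite -(pair_big_dep xpredT (fun u _ => u != bshift C (block x j)) (fun u h => G (u, h))) /=.
rewrite ffunE [RHS]big_mkcond /=; apply: eq_bigr => u _.
case: eqP => [->|_]; first by rewrite big_pred0 // => h; rewrite eqxx.
exact: (sum_addr _ (fun h => Phi (upd (proj_w x) j u) h)).
Qed.

Lemma sum_hadj_proj x :
  \sum_(y | hadj x y) Phi (proj_w y) (proj_s y) =
  \sum_(w | hadj (proj_w x) w) \sum_h Phi w h
  + d * \sum_(s | s != proj_s x) Phi (proj_w x) s.
Proof.
rewrite sum_hadj (reindex coord (onW_bij _ (Bijective coordK coord_invK))) big_sumType /=.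
congr (_ + _).
  transitivity (\sum_j \sum_p \sum_(v | v != x (coord (inl (j, p))))
                  Phi_upd x (coord (inl (j, p))) v).
    by rewrite pair_bigA; apply: eq_bigr => -[].
  by rewrite sum_hadj; apply: eq_bigr => j _; rewrite sum_upd_block.
by rewrite (eq_bigr _ (fun e _ => sum_upd_extra x e)) sum_nat_const card_ord.
Qed.

End Product.


Section Coloring.
Variables (n q b c : nat) (f : hvert n q -> nat).
Hypothesis fcol : bc_coloring f b c.

Lemma bc_coloring_nontrivial : 1 < q /\ 0 < n.
Proof.
case: fcol => _ [x1 fx1] [x2 fx2] _ _.
have /card_gt0P [i] : 0 < hdist x1 x2.
  by rewrite lt0n hdist0; apply: contraTneq isT => x12; move: fx1; rewrite x12 fx2.
rewrite inE => x12i; split; last by case: n i {x12i} => [[]|].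
by case: q x1 x2 {fx1 fx2} x12i => [|[|q']] x1 x2; [case: (x1 i)|rewrite !ord1|].
Qed.

Lemma sum_hadj_col x (psi : nat -> nat) :
  \sum_(y | hadj x y) psi (f y) = psi 1 * ncol f x 1 + psi 2 * ncol f x 2.
Proof.
case: fcol => f12 _ _ _ _; rewrite !ncolE !big_distrr -big_split /=.
by apply: eq_bigr => y _; case: (f12 y) => ->; rewrite ?muln1 ?muln0 ?addn0.
Qed.

Lemma ncol1_add_ncol2 x : ncol f x 1 + ncol f x 2 = n * q.-1.
Proof.
rewrite -(card_hadj x) -sum1_card (eq_bigl (hadj x)) => [|y]; last by rewrite inE.
by rewrite (sum_hadj_col x (fun=> 1)) !mul1n.
Qed.

Lemma sum_hadj_col_extra x (psi : nat -> nat) : n * q.-1 <= b + c ->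
  \sum_(y | hadj x y) psi (f y) + (b + c - n * q.-1) * psi (f x) = psi 1 * c + psi 2 * b.
Proof.
case: fcol => f12 _ _ fb fc bc; rewrite sum_hadj_col.
have := ncol1_add_ncol2 x; set D := n * q.-1 in bc *.
case: (f12 x) => fx; [rewrite (fb _ fx) | rewrite (fc _ fx)] => sumD.
  have e : ncol f x 1 + (b + c - D) = c by lia.
  by rewrite fx [_ * psi 1]mulnC addnAC -mulnDr e.
have e : ncol f x 2 + (b + c - D) = b by lia.
by rewrite fx [_ * psi 2]mulnC -addnA -mulnDr e.
Qed.

End Coloring.

Lemma sum_ord_lt m t : t <= m -> \sum_(h < m) (h < t) = t.
Proof.
move=> tm; have -> : \sum_(h < m) (h < t) = \sum_(0 <= h < m) (h < t) by rewrite big_mkord.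
rewrite (big_cat_nat (leq0n t) tm) /=.
rewrite (eq_big_nat _ _ (F2 := fun=> 1)) => [|h /andP[_ ->] //].
rewrite [X in _ + X](eq_big_nat _ _ (F2 := fun=> 0)) => [|h /andP[th _]]; last first.
  by rewrite ltnNge th.
by rewrite !sum_nat_const_nat subn0 muln1 muln0 addn0.
Qed.

Section LiftColoring.
Variables (k n b c N : nat) (f : hvert n k.+2 -> nat) (C : {set hvert k.+3 k.+2}).
Variables t1 t2 : nat.
Hypothesis HC : perfect_code1 C.
Hypothesis fcol : bc_coloring f b c.
Hypothesis bc_ge : n * k.+1 <= b + c.
Hypotheses (t1q : t1 <= k.+2) (t2q : t2 <= k.+2).
Hypothesis cardN : #|{: 'I_n * 'I_k.+2 + 'I_(b + c - n * k.+1)}| = N.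

Definition threshold (col : nat) : nat := if col == 1 then t1 else t2.
Definition split_col (col : nat) (h : 'I_k.+2) : nat := if h < threshold col then 1 else 2.
Definition lifted (x : hvert N k.+2) : nat :=
  split_col (f (proj_w C cardN x)) (proj_s C cardN x).

Lemma threshold_le col : threshold col <= k.+2.
Proof. by rewrite /threshold; case: (_ == _). Qed.

Lemma sum_split_col1 col : \sum_h (split_col col h == 1) = threshold col.
Proof.
rewrite -(sum_ord_lt (threshold_le col)); apply: eq_bigr => h _.
by rewrite /split_col; case: (_ < _).
Qed.

Lemma sum_split_col2 col : \sum_h (split_col col h == 2) = k.+2 - threshold col.
Proof.
apply/eqP; rewrite -(eqn_add2r (threshold col)) subnK ?threshold_le //.
rewrite -{1}(sum_split_col1 col) -big_split /=.
rewrite -[X in _ == X]card_ord -sum1_card; apply/eqP/eq_bigr => h _.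
by rewrite /split_col; case: (_ < _).
Qed.

Lemma ncol_lifted x col : lifted x != col ->
  ncol lifted x col = \sum_(w | hadj (proj_w C cardN x) w) \sum_h (split_col (f w) h == col)
    + (b + c - n * k.+1) * \sum_h (split_col (f (proj_w C cardN x)) h == col).
Proof.
move=> xcol; rewrite ncolE (sum_hadj_proj HC cardN (fun w h => split_col (f w) h == col)).
by rewrite [in RHS](bigD1 (proj_s C cardN x)) //= (negbTE xcol).
Qed.

Lemma lifted_colE w s : exists x, lifted x = split_col (f w) s.
Proof.
have [_ n_gt0] := bc_coloring_nontrivial fcol.
have [x [xw xs]] := proj_surj HC cardN w s (Ordinal n_gt0).
by exists x; rewrite /lifted xw xs.
Qed.

Lemma ncol_lifted_sum x col psi : lifted x != col ->
  (forall col', \sum_h (split_col col' h == col) = psi col') ->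
  ncol lifted x col = psi 1 * c + psi 2 * b.
Proof.
move=> xcol psiE; rewrite ncol_lifted // psiE (eq_bigr _ (fun w _ => psiE (f w))).
exact: sum_hadj_col_extra.
Qed.

Hypotheses (t12_gt0 : t1 + t2 != 0) (t12_lt : t1 + t2 != 2 * k.+2).

Lemma lifted_coloring :
  bc_coloring lifted (k.+2 * (b + c) - (c * t1 + b * t2)) (c * t1 + b * t2).
Proof.
case: fcol => _ [x1 fx1] [x2 fx2] _ _; split.
- by move=> x; rewrite /lifted /split_col; case: (_ < _); [left|right].
- case: (posnP t1) => [t1_0|t1_gt0].
    have [y yE] := lifted_colE x2 ord0; exists y.
    by rewrite yE /split_col fx2 /threshold /=; move: t12_gt0; rewrite t1_0 lt0n => ->.
  have [y yE] := lifted_colE x1 ord0; exists y.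
  by rewrite yE /split_col fx1 /threshold /= t1_gt0.
- case: (ltnP t1 k.+2) => [t1_lt|t1_ge].
    have [y yE] := lifted_colE x1 ord_max; exists y.
    by rewrite yE /split_col fx1 /threshold /= ltnNge -ltnS t1_lt.
  have [y yE] := lifted_colE x2 ord_max; exists y.
  rewrite yE /split_col fx2 /threshold /= ltnNge -ltnS.
  by have -> : t2 < k.+2 by move: t12_lt t1_ge t2q; lia.
- move=> x x1'; rewrite (ncol_lifted_sum (psi := fun col => k.+2 - threshold col)) ?x1' //.
    rewrite /threshold /= !mulnBl.
    by have := leq_mul t1q (leqnn c); have := leq_mul t2q (leqnn b); lia.
  exact: sum_split_col2.
- move=> x x2'; rewrite (ncol_lifted_sum (psi := threshold)) ?x2' //.
    by rewrite /threshold /= mulnC [b * _]mulnC.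
  exact: sum_split_col1.
Qed.

End LiftColoring.

Lemma main_eig_lift q n N b c b' c' : 0 < q ->
  (N%:Z = (q * n)%N%:Z - main_eig n q b c)%R -> b' + c' = q * (b + c) ->
  main_eig N q b' c' = main_eig n q b c.
Proof.
move=> q_gt0 NE bc'; rewrite /main_eig bc' !PoszM NE -subzn //.
by rewrite /main_eig !PoszM PoszD -subzn //; ring.
Qed.

Theorem theorem6 (q n b c : nat) (f : hvert n q -> nat) :
  (exists C : {set hvert q.+1 q}, perfect_code1 C) ->
  bc_coloring f b c ->
  (main_eig n q b c <= 0)%R ->
  forall t1 t2 : nat, t1 <= q -> t2 <= q ->
  t1 + t2 != 0 -> t1 + t2 != 2 * q ->
  forall N : nat, (N%:Z = (q * n)%N%:Z - main_eig n q b c)%R ->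
  exists F : hvert N q -> nat,
    bc_coloring F (q * (b + c) - (c * t1 + b * t2)) (c * t1 + b * t2) /\
    main_eig N q (q * (b + c) - (c * t1 + b * t2)) (c * t1 + b * t2)
      = main_eig n q b c.
Proof.
move=> [C HC] fcol eig_le0 t1 t2 t1q t2q t12_gt0 t12_lt N NE.
have [q_gt1 _] := bc_coloring_nontrivial fcol.
have bct_le : c * t1 + b * t2 <= q * (b + c).
  by rewrite mulnDr addnC; apply: leq_add; rewrite mulnC leq_mul2r ?t1q ?t2q orbT.
case: q q_gt1 f C HC fcol eig_le0 t1q t2q t12_lt NE bct_le => [|[|k]] // _ f C HC fcol.
move=> eig_le0 t1q t2q t12_lt NE bct_le.
have bc_ge : n * k.+1 <= b + c by move: eig_le0; rewrite /main_eig subr_le0 lez_nat subn1.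
have cardN : #|{: 'I_n * 'I_k.+2 + 'I_(b + c - n * k.+1)}| = N.
  rewrite card_sum card_prod !card_ord; apply/eqP; rewrite -eqz_nat NE /main_eig.
  by rewrite subn1 /= PoszD -subzn // !PoszM !PoszD; apply/eqP; ring.
exists (lifted f C t1 t2 cardN); split; first exact: lifted_coloring.
by apply: main_eig_lift; rewrite ?subnK.
Qed.
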